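(* Let $d\ge1$ and let $G$ be the lattice $\mathbb Z^d$ (with $x\sim y$ iff $|x-y|_1=1$), unweighted, with Laplacian $\Delta u(x)=\frac1{\mu_0}\sum_{y\sim x}(u(y)-u(x))$ for a constant $\mu_0>0$, and $L=-\Delta$. Then for every $a>0$ there exists $v:\mathbb Z^d\to\mathbb R$ with $Lv(0)=a$, $Lv(0)\ge Lv(y)$ for all $y\sim0$, and $$\Delta\Psi_{\Upsilon'}(v)(0)=F(Lv(0))=F(a),$$ where $F(a)=\frac{D}{\mu_0^2}\exp\big(-\frac{\mu_0}{D}a\big)\big[\Upsilon\big(\frac{2\mu_0}{D}a\big)+(D-1)\Upsilon\big(-\frac{2\mu_0}{D(D-1)}a\big)\big]$ with $D=2d$.
   Context: $\Psi_H(v)(x)=\frac1{\mu_0}\sum_{y\sim x}H(v(y)-v(x))$ for $H:\mathbb R\to\mathbb R$; $\Upsilon(z)=e^z-1-z$, $\Upsilon'(z)=e^z-1$. *)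

From Stdlib Require Import Reals Lra Lia ZArith List.
Open Scope R_scope.

(* Points of Z^d: integer vectors indexed by coordinates 0..d-1
   (coordinates >= d are required to be 0, so this type is exactly Z^d). *)
Definition pt (d : nat) : Type :=
  { x : nat -> Z | forall i, (d <= i)%nat -> x i = 0%Z }.

Definition coord {d} (x : pt d) (i : nat) : Z := proj1_sig x i.

Definition origin (d : nat) : pt d :=
  exist _ (fun _ => 0%Z) (fun _ _ => eq_refl).

Definition sumR (n : nat) (f : nat -> R) : R :=
  fold_right Rplus 0 (map f (seq 0 n)).

Definition adj {d} (x y : pt d) : Prop :=
  sumR d (fun i => IZR (Z.abs (coord x i - coord y i))) = 1.

(* x + s e_i (only meaningful / used for i < d; for i >= d it is x). *)
Definition shift {d} (x : pt d) (i : nat) (s : Z) : pt d.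
Proof.
  refine (exist _ (fun j => if (Nat.eqb j i && Nat.ltb i d)%bool
                            then (coord x j + s)%Z else coord x j) _).
  intros j Hj. destruct (Nat.eqb j i) eqn:E1; destruct (Nat.ltb i d) eqn:E2;
    simpl; try exact (proj2_sig x j Hj).
  apply Nat.eqb_eq in E1; apply Nat.ltb_lt in E2; lia.
Defined.

Definition nbsum {d} (g : pt d -> R) (x : pt d) : R :=
  sumR d (fun i => g (shift x i 1%Z) + g (shift x i (-1)%Z)).

Definition Lap {d} (mu0 : R) (u : pt d -> R) (x : pt d) : R :=
  / mu0 * nbsum (fun y => u y - u x) x.

Definition Lop {d} (mu0 : R) (u : pt d -> R) (x : pt d) : R := - Lap mu0 u x.

Definition Psi {d} (mu0 : R) (H : R -> R) (v : pt d -> R) (x : pt d) : R :=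
  / mu0 * nbsum (fun y => H (v y - v x)) x.

Definition Ups (z : R) : R := exp z - 1 - z.
Definition Ups' (z : R) : R := exp z - 1.

Definition Fd (d : nat) (mu0 a : R) : R :=
  let D := INR (2 * d) in
  D / (mu0 ^ 2) * exp (- (mu0 / D) * a) *
  (Ups (2 * mu0 / D * a) + (D - 1) * Ups (- (2 * mu0 / (D * (D - 1))) * a)).

From Stdlib Require Import Reals Lra Lia ZArith List.
Open Scope R_scope.

(* Take v radial, v(x) = phi(|x|_1), with phi quadratic.  On the unit cube
   {|x_j| <= 1} the neighbour sum of a radial function only depends on
   n = |x|_1: of the 2d neighbours, n move inward and 2d - n outward.  Hence
   Lv and Psi(v) are radial there, and every quantity in the theorem is a
   one-variable expression in phi(0), phi(1), phi(2).  Choosing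
   phi(m) = -c m - c m (m - 1) / (D - 1) with c = mu0 a / D makes
   Lv(0) = a = Lv(y) for all y ~ 0, and Delta Psi(v)(0) evaluates to F(a). *)

Lemma fold_right_Rplus_acc (l : list R) (x : R) :
  fold_right Rplus x l = fold_right Rplus 0 l + x.
Proof. induction l as [|y l IH]; simpl; [ring | rewrite IH; ring]. Qed.

Lemma sumR_S n f : sumR (S n) f = sumR n f + f n.
Proof.
  unfold sumR. rewrite seq_S, map_app, fold_right_app. simpl.
  rewrite fold_right_Rplus_acc. ring.
Qed.

Lemma sumR_ext n f g : (forall k, (k < n)%nat -> f k = g k) -> sumR n f = sumR n g.
Proof.
  induction n as [|n IH]; intros Hfg; [reflexivity|].
  rewrite !sumR_S, IH, Hfg; auto.
Qed.

Lemma sumR_affine n A B f : sumR n (fun k => A + B * f k) = INR n * A + B * sumR n f.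
Proof.
  induction n as [|n IH]; [unfold sumR; simpl; ring|].
  rewrite !sumR_S, IH, S_INR. ring.
Qed.

Lemma sumR_update n f g i : (i < n)%nat ->
  (forall k, (k < n)%nat -> k <> i -> f k = g k) -> sumR n f = sumR n g - g i + f i.
Proof.
  induction n as [|n IH]; intros Hi Hfg; [lia|]. rewrite !sumR_S.
  destruct (Nat.eq_dec i n) as [->|Hne].
  - rewrite (sumR_ext n f g); [ring|]. intros k Hk; apply Hfg; lia.
  - rewrite IH by (try lia; intros; apply Hfg; lia). rewrite (Hfg n) by lia. ring.
Qed.

Lemma sumR_nonneg n f : (forall k, (k < n)%nat -> 0 <= f k) -> 0 <= sumR n f.
Proof.
  induction n as [|n IH]; intros Hf; [unfold sumR; simpl; lra|]. rewrite sumR_S.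
  assert (0 <= sumR n f) by (apply IH; intros; apply Hf; lia).
  assert (0 <= f n) by (apply Hf; lia). lra.
Qed.

Lemma sumR_ge_term n f i :
  (forall k, (k < n)%nat -> 0 <= f k) -> (i < n)%nat -> f i <= sumR n f.
Proof.
  induction n as [|n IH]; intros Hf Hi; [lia|]. rewrite sumR_S.
  assert (0 <= sumR n f) by (apply sumR_nonneg; intros; apply Hf; lia).
  assert (0 <= f n) by (apply Hf; lia).
  destruct (Nat.eq_dec i n) as [->|Hne]; [lra|].
  assert (f i <= sumR n f) by (apply IH; [intros; apply Hf; lia | lia]). lra.
Qed.

Definition norm1 {d} (x : pt d) : R := sumR d (fun i => IZR (Z.abs (coord x i))).

Definition in_unit_cube {d} (x : pt d) : Prop :=
  forall j, (j < d)%nat -> (Z.abs (coord x j) <= 1)%Z.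

Lemma coord_shift d (x : pt d) i s k : coord (shift x i s) k =
  if (Nat.eqb k i && Nat.ltb i d)%bool then (coord x k + s)%Z else coord x k.
Proof. reflexivity. Qed.

Lemma norm1_origin d : norm1 (origin d) = 0.
Proof.
  unfold norm1. rewrite (sumR_ext _ _ (fun _ => 0 + 0 * 0)) by (intros; simpl; ring).
  rewrite sumR_affine. ring.
Qed.

Lemma norm1_shift d (x : pt d) i s : (i < d)%nat ->
  norm1 (shift x i s) = norm1 x - IZR (Z.abs (coord x i)) + IZR (Z.abs (coord x i + s)).
Proof.
  intros Hi. unfold norm1.
  rewrite (sumR_update d _ (fun k => IZR (Z.abs (coord x k))) i Hi).
  - rewrite coord_shift, Nat.eqb_refl, (proj2 (Nat.ltb_lt i d) Hi). reflexivity.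
  - intros k _ Hne. rewrite coord_shift, (proj2 (Nat.eqb_neq k i) Hne). reflexivity.
Qed.

Lemma norm1_adj_origin d (y : pt d) : adj (origin d) y -> norm1 y = 1.
Proof.
  unfold adj. intros <-. apply sumR_ext. intros k _.
  simpl (coord (origin d) k). rewrite Z.sub_0_l, Z.abs_opp. reflexivity.
Qed.

Lemma in_unit_cube_origin d : in_unit_cube (origin d).
Proof. intros j _. simpl. lia. Qed.

Lemma in_unit_cube_shift_origin d i t : Z.abs t = 1%Z ->
  in_unit_cube (shift (origin d) i t).
Proof.
  intros Ht j _. rewrite coord_shift. simpl coord.
  destruct (Nat.eqb j i && Nat.ltb i d)%bool; lia.
Qed.

Lemma in_unit_cube_of_norm1_le1 d (y : pt d) : norm1 y <= 1 -> in_unit_cube y.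
Proof.
  intros Hy j Hj. apply le_IZR.
  apply Rle_trans with (norm1 y); [|exact Hy].
  apply (sumR_ge_term d (fun i => IZR (Z.abs (coord y i)))); auto.
  intros; apply IZR_le; lia.
Qed.

Lemma radial_pair (G : R -> R) (n : R) (z : Z) : (Z.abs z <= 1)%Z ->
  G (n - IZR (Z.abs z) + IZR (Z.abs (z + 1))) + G (n - IZR (Z.abs z) + IZR (Z.abs (z + -1)))
  = 2 * G (n + 1) + (G (n - 1) - G (n + 1)) * IZR (Z.abs z).
Proof.
  intros Hz.
  assert (Hc : z = (-1)%Z \/ z = 0%Z \/ z = 1%Z) by lia.
  destruct Hc as [-> | [-> | ->]]; cbn -[IZR].
  - replace (n - 1 + 0) with (n - 1) by ring; replace (n - 1 + 2) with (n + 1) by ring; ring.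
  - replace (n - 0 + 1) with (n + 1) by ring; ring.
  - replace (n - 1 + 0) with (n - 1) by ring; replace (n - 1 + 2) with (n + 1) by ring; ring.
Qed.

Lemma nbsum_radial d (g : pt d -> R) (G : R -> R) (y : pt d) : in_unit_cube y ->
  (forall j t, (j < d)%nat -> Z.abs t = 1%Z -> g (shift y j t) = G (norm1 (shift y j t))) ->
  nbsum g y = (INR (2 * d) - norm1 y) * G (norm1 y + 1) + norm1 y * G (norm1 y - 1).
Proof.
  intros Hy Hg. unfold nbsum.
  rewrite (sumR_ext _ _ (fun j => 2 * G (norm1 y + 1) +
     (G (norm1 y - 1) - G (norm1 y + 1)) * IZR (Z.abs (coord y j)))).
  - rewrite sumR_affine, mult_INR. fold (norm1 y). simpl (INR 2). ring.
  - intros j Hj. rewrite !Hg, !norm1_shift by (auto; lia). apply radial_pair, Hy, Hj.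
Qed.

Definition radial_Psi (mu0 D : R) (H G : R -> R) (n : R) : R :=
  / mu0 * ((D - n) * H (G (n + 1) - G n) + n * H (G (n - 1) - G n)).

Lemma Psi_radial d mu0 H G (y : pt d) : in_unit_cube y ->
  Psi mu0 H (fun x => G (norm1 x)) y = radial_Psi mu0 (INR (2 * d)) H G (norm1 y).
Proof.
  intros Hy. unfold Psi, radial_Psi. f_equal.
  apply (nbsum_radial d _ (fun m => H (G m - G (norm1 y)))); auto.
Qed.

Lemma Lap_radial d mu0 G (y : pt d) : in_unit_cube y ->
  Lap mu0 (fun x => G (norm1 x)) y = radial_Psi mu0 (INR (2 * d)) (fun z => z) G (norm1 y).
Proof. exact (Psi_radial d mu0 (fun z => z) G y). Qed.

Lemma Lap_Psi_radial_origin d mu0 H G :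
  Lap mu0 (Psi mu0 H (fun x => G (norm1 x))) (origin d) =
  / mu0 * (INR (2 * d) * (radial_Psi mu0 (INR (2 * d)) H G 1 -
                          radial_Psi mu0 (INR (2 * d)) H G 0)).
Proof.
  unfold Lap. f_equal.
  rewrite (nbsum_radial d _ (fun m => radial_Psi mu0 (INR (2 * d)) H G m -
                                      radial_Psi mu0 (INR (2 * d)) H G 0)).
  - rewrite norm1_origin. ring_simplify (0 + 1). ring.
  - apply in_unit_cube_origin.
  - intros j t _ Ht. rewrite !Psi_radial, norm1_origin;
      auto using in_unit_cube_origin, in_unit_cube_shift_origin.
Qed.

Definition phi (c D m : R) : R := - c * m - c / (D - 1) * (m * (m - 1)).

Section OneVariable.

Variables (mu0 D c : R).
Hypothesis (hmu : 0 < mu0) (hD : 2 <= D).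

Lemma radial_L_phi_0 : - radial_Psi mu0 D (fun z => z) (phi c D) 0 = D * c / mu0.
Proof. unfold radial_Psi, phi. field. lra. Qed.

Lemma radial_L_phi_1 : - radial_Psi mu0 D (fun z => z) (phi c D) 1 = D * c / mu0.
Proof. unfold radial_Psi, phi. field. lra. Qed.

Lemma radial_Lap_Psi_phi :
  / mu0 * (D * (radial_Psi mu0 D Ups' (phi c D) 1 - radial_Psi mu0 D Ups' (phi c D) 0)) =
  D / mu0 ^ 2 * exp (- c) *
  (Ups (2 * c) + (D - 1) * Ups (- (2 * c / (D - 1)))).
Proof.
  unfold radial_Psi, Ups', Ups.
  replace (phi c D (1 + 1) - phi c D 1) with (- c + - (2 * c / (D - 1)))
    by (unfold phi; field; lra).
  replace (phi c D (1 - 1) - phi c D 1) with c by (unfold phi; field; lra).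
  replace (phi c D (0 + 1) - phi c D 0) with (- c) by (unfold phi; field; lra).
  replace (exp (2 * c)) with (exp c * exp c) by (rewrite <- exp_plus; f_equal; ring).
  rewrite !exp_plus, !exp_Ropp.
  assert (Hc : exp c <> 0) by apply Rgt_not_eq, exp_pos.
  assert (Hb : exp (2 * c / (D - 1)) <> 0) by apply Rgt_not_eq, exp_pos.
  generalize (exp (phi c D (0 - 1) - phi c D 0)) (exp c) (exp (2 * c / (D - 1))) Hc Hb.
  intros X Ec Eb HEc HEb. field. lra.
Qed.

End OneVariable.

Theorem theorem3p12 (d : nat) (mu0 : R) (hd : (1 <= d)%nat) (hmu : 0 < mu0) :
  forall a : R, 0 < a ->
  exists v : pt d -> R,
    Lop mu0 v (origin d) = a /\
    (forall y : pt d, adj (origin d) y -> Lop mu0 v (origin d) >= Lop mu0 v y) /\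
    Lap mu0 (Psi mu0 Ups' v) (origin d) = Fd d mu0 (Lop mu0 v (origin d)) /\
    Fd d mu0 (Lop mu0 v (origin d)) = Fd d mu0 a.
Proof.
  intros a ha.
  set (D := INR (2 * d)).
  assert (hD : 2 <= D) by (apply (le_INR 2); lia).
  set (c := mu0 * a / D).
  assert (Lc : D * c / mu0 = a) by (unfold c; field; lra).
  exists (fun x => phi c D (norm1 x)).
  assert (L0 : Lop mu0 (fun x => phi c D (norm1 x)) (origin d) = a).
  { unfold Lop. rewrite Lap_radial, norm1_origin by apply in_unit_cube_origin.
    rewrite radial_L_phi_0; lra. }
  rewrite L0. split; [reflexivity | split; [| split; [| reflexivity]]].
  - intros y Hy. apply norm1_adj_origin in Hy.
    unfold Lop. rewrite Lap_radial, Hy by (apply in_unit_cube_of_norm1_le1; lra).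
    rewrite radial_L_phi_1; lra.
  - rewrite Lap_Psi_radial_origin. fold D. rewrite radial_Lap_Psi_phi by lra.
    unfold Fd. fold D.
    replace (- (mu0 / D) * a) with (- c) by (unfold c; field; lra).
    replace (2 * mu0 / D * a) with (2 * c) by (unfold c; field; lra).
    replace (- (2 * mu0 / (D * (D - 1))) * a) with (- (2 * c / (D - 1)))
      by (unfold c; field; lra).
    reflexivity.
Qed.
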